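(* Let $V=2V_2\oplus V_4$ and $R=\mathcal{O}(V)^{\mathrm{SL}_2(\mathbb{C})}$. Then $R$ has no homogeneous system of parameters with degrees $2,2,2,2,3,3,3,4$; indeed, all invariants of degree $2$ or $3$ vanish at every point $(ax^2,bx^2,xy^3)$, $a,b\in\mathbb{C}$.
   Context: $V_k$ is the $\mathrm{SL}_2(\mathbb{C})$-module of complex binary forms of degree $k$ in $x,y$; $2V_2=V_2\oplus V_2$; $R$ is the graded algebra of invariant polynomial functions on $V$. A homogeneous system of parameters is a set of algebraically independent homogeneous elements of positive degree over whose generated subalgebra $R$ is integral. *)

From HB Require Import structures.
From mathcomp Require Import all_boot all_algebra.
From mathcomp Require Import mpoly.
Set Implicit Arguments. Unset Strict Implicit. Unset Printing Implicit Defensive.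
Import GRing.Theory Num.Theory.
Local Open Scope ring_scope.

(* V = 2V_2 (+) V_4 has dimension 3 + 3 + 5 = 11.  A point of V is a
   coordinate vector v : 'I_11 -> C, where
     v 0, v 1, v 2          are the coefficients of the first  quadratic form,
     v 3, v 4, v 5          are the coefficients of the second quadratic form,
     v 6, ..., v 10         are the coefficients of the quartic form,
   with the convention that the coefficient vector (c_0,...,c_k) represents
   the binary form  sum_i c_i x^(k-i) y^i . *)

Section BinaryForms.
Variable C : numClosedFieldType.

Definition coordV (v : 'I_11 -> C) (j : nat) : C := v (inord j).

Definition bform (k off : nat) (v : 'I_11 -> C) (x y : C) : C :=
  \sum_(i < k.+1) coordV v (off + i) * x ^+ (k - i) * y ^+ i.

Definition formA (v : 'I_11 -> C) := bform 2 0 v.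
Definition formB (v : 'I_11 -> C) := bform 2 3 v.
Definition formC (v : 'I_11 -> C) := bform 4 6 v.

(* g = [[a, b], [c, d]] in SL_2(C) sends v to v' (i.e. v' = g . v), where
   (g . f)(x, y) = f (g^{-1} (x, y)), i.e. (g . f)(g (x,y)) = f (x,y);
   the action on V is componentwise. *)
Definition SL2_moves (a b c d : C) (v v' : 'I_11 -> C) : Prop :=
  forall x y : C,
    [/\ formA v' (a * x + b * y) (c * x + d * y) = formA v x y,
        formB v' (a * x + b * y) (c * x + d * y) = formB v x y &
        formC v' (a * x + b * y) (c * x + d * y) = formC v x y].

Definition SL2_invariant (p : {mpoly C[11]}) : Prop :=
  forall a b c d : C, a * d - b * c = 1 ->
  forall v v' : 'I_11 -> C, SL2_moves a b c d v v' -> meval v' p = meval v p.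

Definition in_gen_subalg (m : nat) (f : 'I_m -> {mpoly C[11]})
  (r : {mpoly C[11]}) : Prop :=
  exists Q : {mpoly C[m]}, r = Q \mPo [tuple f i | i < m].

Definition alg_indep (m : nat) (f : 'I_m -> {mpoly C[11]}) : Prop :=
  forall Q : {mpoly C[m]}, Q \mPo [tuple f i | i < m] = 0 -> Q = 0.

Definition R_integral_over (m : nat) (f : 'I_m -> {mpoly C[11]}) : Prop :=
  forall r : {mpoly C[11]}, SL2_invariant r ->
  exists (n : nat) (s : 'I_n -> {mpoly C[11]}),
    (forall i, in_gen_subalg f (s i)) /\
    r ^+ n + \sum_(i < n) s i * r ^+ i = 0.

Definition is_hsop (m : nat) (f : 'I_m -> {mpoly C[11]}) : Prop :=
  [/\ forall i, SL2_invariant (f i),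
      forall i, exists2 d : nat, (0 < d)%N & f i \is d.-homog,
      alg_indep f &
      R_integral_over f].

(* the point (a x^2, b x^2, x y^3) of V *)
Definition special_point (a b : C) : 'I_11 -> C :=
  fun j => if val j == 0%N then a
           else if val j == 3%N then b
           else if val j == 9%N then 1 else 0.

End BinaryForms.

Definition hsop_degs : 'I_8 -> nat := fun i => nth 0%N [:: 2; 2; 2; 2; 3; 3; 3; 4]%N i.

From Pilot Require Import Defs.
From HB Require Import structures.
From mathcomp Require Import all_boot all_algebra.
From mathcomp Require Import mpoly ring.

Set Implicit Arguments. Unset Strict Implicit. Unset Printing Implicit Defensive.
Import GRing.Theory Num.Theory.
Local Open Scope ring_scope.

(* Under diag(t, t^-1) the point (a x^2, b x^2, x y^3) has weights -2, -2, 2, so t = i maps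
   it to its opposite and every cubic invariant vanishes there.  A quadratic invariant is
   governed by its polar form; torus weights leave only the pairings of x^2 with x y^3, and
   two unipotent substitutions force these to vanish as well.  A quartic invariant q
   restricts to a binary quadratic form in (a, b), hence has a nontrivial zero v0 on this
   plane.  All members of a would-be system of parameters of degrees 2,2,2,2,3,3,3,4 then
   vanish at v0, while the degree-4 invariant disc (A, C)_2 (or disc (B, C)_2) does not;
   integrality would make it constant on the line through v0, yet it takes every value there. *)

Section HomogeneousEvaluation.
Variables (R : comRingType) (n : nat).
Implicit Types (p : {mpoly R[n]}) (u v w : 'I_n -> R) (k : R).

Lemma mevalXn v p (k : nat) : meval v (p ^+ k) = meval v p ^+ k.
Proof. exact: rmorphXn. Qed.

Lemma meval_homogZ d p k v :
  p \is d.-homog -> meval (fun i => k * v i) p = k ^+ d * meval v p.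
Proof.
move=> /dhomogP p_d; rewrite !mevalE big_distrr /=.
apply: eq_big_seq => m m_p; rewrite mulrCA; congr (_ * _).
under eq_bigr do rewrite exprMn.
by rewrite big_split /= prodrXr -mdegE p_d.
Qed.

Lemma meval_line_poly p u w :
  exists G : {poly R}, forall x, meval (fun i => u i + w i * x) p = G.[x].
Proof.
exists (\sum_(m <- msupp p) (p@_m)%:P * \prod_i ((u i)%:P + w i *: 'X) ^+ m i) => x.
rewrite mevalE horner_sum; apply: eq_bigr => m _; rewrite hornerCM horner_prod.
by congr (_ * _); apply: eq_bigr => i _; rewrite horner_exp hornerD hornerC hornerZ hornerX.
Qed.

Lemma mdeg2_prod (m : 'X_{1..n}) : mdeg m = 2%N ->
  exists i j, forall v, \prod_k v k ^+ m k = v i * v j.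
Proof.
move=> m2.
have [i m_i] : exists i, (0 < m i)%N.
  apply/existsP; apply: contraT; rewrite negb_exists => /forallP m0.
  by move: m2; rewrite mdegE big1 // => k _; move: (m0 k); rewrite lt0n negbK => /eqP.
pose m' := (m - U_(i))%MM.
have Em : m = (m' + U_(i))%MM.
  apply/mnmP => k; rewrite mnmDE mnmBE mnm1E.
  by case: eqP => [<-|_]; rewrite ?subn0 ?addn0 ?subnK.
have : mdeg m' == 1%N by move: m2; rewrite Em mdegD mdeg1 addn1 => -[->].
case/mdeg1P => j /eqP Ej; exists i, j => v.
rewrite Em Ej; under eq_bigr do rewrite mnmDE exprD.
rewrite big_split /= mulrC.
by congr (_ * _); [rewrite (bigD1 i) | rewrite (bigD1 j)] => //=;
  rewrite mnm1E eqxx big1 ?mulr1 // => k /negbTE; rewrite mnm1E eq_sym => ->.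
Qed.

End HomogeneousEvaluation.

Section Polarization.
Variables (R : comRingType) (n : nat) (p : {mpoly R[n]}).
Implicit Types (u w : 'I_n -> R) (k : R).

Definition polar u w := meval (u \+ w) p - meval u p - meval w p.

Lemma polarC u w : polar u w = polar w u.
Proof.
rewrite /polar (@meval_eq _ _ (u \+ w) (w \+ u)) => [|i]; last exact: addrC.
by rewrite addrAC.
Qed.

Lemma eq_polar u u' w w' : u =1 u' -> w =1 w' -> polar u w = polar u' w'.
Proof.
move=> eq_u eq_w; rewrite /polar (meval_eq p eq_u) (meval_eq p eq_w).
by congr (_ - _ - _); apply: meval_eq => i /=; rewrite eq_u eq_w.
Qed.

Lemma polar_sum u w : polar u w =
  \sum_(m <- msupp p) p@_m * (\prod_i (u \+ w) i ^+ m i - \prod_i u i ^+ m i - \prod_i w i ^+ m i).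
Proof. by rewrite /polar !mevalE -!sumrB; apply: eq_bigr => m _; ring. Qed.

Hypothesis p2 : p \is 2.-homog.

Lemma polarDl u u' w : polar (u \+ u') w = polar u w + polar u' w.
Proof.
rewrite !polar_sum -big_split /=; apply: eq_big_seq => m /(dhomog_mf p2) m2.
by have [i [j E]] := mdeg2_prod R m2; rewrite !E /=; ring.
Qed.

Lemma polarZl k u w : polar (fun i => k * u i) w = k * polar u w.
Proof.
rewrite !polar_sum big_distrr /=; apply: eq_big_seq => m /(dhomog_mf p2) m2.
by have [i [j E]] := mdeg2_prod R m2; rewrite !E /=; ring.
Qed.

Lemma polarDr u w w' : polar u (w \+ w') = polar u w + polar u w'.
Proof. by rewrite polarC polarDl !(polarC u). Qed.

Lemma polarZr k u w : polar u (fun i => k * w i) = k * polar u w.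
Proof. by rewrite polarC polarZl polarC. Qed.

Lemma polarxx u : polar u u = 2 * meval u p.
Proof.
rewrite polar_sum mevalE big_distrr /=; apply: eq_big_seq => m /(dhomog_mf p2) m2.
by have [i [j E]] := mdeg2_prod R m2; rewrite !E /=; ring.
Qed.

End Polarization.

Section BinaryForms.
Variable R : comRingType.
Implicit Types (a b c d x y : R) (g h al ga : nat -> R).

Definition binform (k : nat) g x y : R := \sum_(i < k.+1) g i * x ^+ (k - i) * y ^+ i.

Lemma eq_binform k g h : (forall i, (i <= k)%N -> g i = h i) -> binform k g =2 binform k h.
Proof. by move=> eq_gh x y; apply: eq_bigr => i _; rewrite eq_gh // -ltnS. Qed.

(* coefficients of [(x, y) |-> F (a x + b y, c x + d y)] for a quadratic, resp. quartic, F *)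
Definition sub2 a b c d g (k : nat) : R := match k with
 | 0 => g 0%N * a ^+ 2 + g 1%N * (a * c) + g 2%N * c ^+ 2
 | 1 => g 0%N * (2 * a * b) + g 1%N * (b * c + a * d) + g 2%N * (2 * c * d)
 | 2 => g 0%N * b ^+ 2 + g 1%N * (b * d) + g 2%N * d ^+ 2
 | _ => 0 end.

Definition sub4 a b c d g (k : nat) : R := match k with
 | 0 => g 0%N * a ^+ 4 + g 1%N * (a ^+ 3 * c) + g 2%N * (a ^+ 2 * c ^+ 2)
        + g 3%N * (a * c ^+ 3) + g 4%N * c ^+ 4
 | 1 => g 0%N * (4 * a ^+ 3 * b) + g 1%N * (3 * a ^+ 2 * b * c + a ^+ 3 * d)
        + g 2%N * (2 * a * b * c ^+ 2 + 2 * a ^+ 2 * c * d)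
        + g 3%N * (b * c ^+ 3 + 3 * a * c ^+ 2 * d) + g 4%N * (4 * c ^+ 3 * d)
 | 2 => g 0%N * (6 * a ^+ 2 * b ^+ 2) + g 1%N * (3 * a * b ^+ 2 * c + 3 * a ^+ 2 * b * d)
        + g 2%N * (b ^+ 2 * c ^+ 2 + 4 * a * b * c * d + a ^+ 2 * d ^+ 2)
        + g 3%N * (3 * b * c ^+ 2 * d + 3 * a * c * d ^+ 2) + g 4%N * (6 * c ^+ 2 * d ^+ 2)
 | 3 => g 0%N * (4 * a * b ^+ 3) + g 1%N * (b ^+ 3 * c + 3 * a * b ^+ 2 * d)
        + g 2%N * (2 * b ^+ 2 * c * d + 2 * a * b * d ^+ 2)
        + g 3%N * (3 * b * c * d ^+ 2 + a * d ^+ 3) + g 4%N * (4 * c * d ^+ 3)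
 | 4 => g 0%N * b ^+ 4 + g 1%N * (b ^+ 3 * d) + g 2%N * (b ^+ 2 * d ^+ 2)
        + g 3%N * (b * d ^+ 3) + g 4%N * d ^+ 4
 | _ => 0 end.

Lemma binform2_sub a b c d g x y :
  binform 2 g (a * x + b * y) (c * x + d * y) = binform 2 (sub2 a b c d g) x y.
Proof. by rewrite /binform !big_ord_recr !big_ord0 /=; ring. Qed.

Lemma binform4_sub a b c d g x y :
  binform 4 g (a * x + b * y) (c * x + d * y) = binform 4 (sub4 a b c d g) x y.
Proof. by rewrite /binform !big_ord_recr !big_ord0 /=; ring. Qed.

Lemma sub2D a b c d g h k :
  sub2 a b c d (g \+ h) k = sub2 a b c d g k + sub2 a b c d h k.
Proof. by case: k => [|[|[|k]]] /=; rewrite ?addr0 //; ring. Qed.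

Lemma sub4D a b c d g h k :
  sub4 a b c d (g \+ h) k = sub4 a b c d g k + sub4 a b c d h k.
Proof. by case: k => [|[|[|[|[|k]]]]] /=; rewrite ?addr0 //; ring. Qed.

(* the coefficients of the second transvectant (al, ga)_2 of a quadratic and a quartic,
   a quadratic covariant, up to a constant factor *)
Definition transv2 al ga (k : nat) : R := match k with
 | 0 => 2 * al 0%N * ga 2%N - 3 * al 1%N * ga 1%N + 12 * al 2%N * ga 0%N
 | 1 => 6 * al 0%N * ga 3%N - 4 * al 1%N * ga 2%N + 6 * al 2%N * ga 1%N
 | 2 => 12 * al 0%N * ga 4%N - 3 * al 1%N * ga 3%N + 2 * al 2%N * ga 2%N
 | _ => 0 end.

Definition disc2 g := g 1%N ^+ 2 - 4 * g 0%N * g 2%N.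

Definition disc_transv al ga := disc2 (transv2 al ga).

Lemma transv2_sub a b c d al ga k : (k <= 2)%N ->
  transv2 (sub2 a b c d al) (sub4 a b c d ga) k =
  (a * d - b * c) ^+ 2 * sub2 a b c d (transv2 al ga) k.
Proof. by case: k => [|[|[|k]]] //= _; ring. Qed.

Lemma disc2_sub a b c d g : disc2 (sub2 a b c d g) = (a * d - b * c) ^+ 2 * disc2 g.
Proof. by rewrite /disc2 /=; ring. Qed.

Lemma disc_transv_sub a b c d al ga :
  disc_transv (sub2 a b c d al) (sub4 a b c d ga) = (a * d - b * c) ^+ 6 * disc_transv al ga.
Proof.
rewrite /disc_transv {1}/disc2 !transv2_sub //.
transitivity ((a * d - b * c) ^+ 4 * disc2 (sub2 a b c d (transv2 al ga))).
  by rewrite /disc2; ring.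
by rewrite disc2_sub; ring.
Qed.

Lemma eq_disc_transv al al' ga ga' : (forall i, (i <= 2)%N -> al i = al' i) ->
  (forall i, (i <= 4)%N -> ga i = ga' i) -> disc_transv al ga = disc_transv al' ga'.
Proof. by move=> eq_al eq_ga; rewrite /disc_transv /disc2 /transv2 !eq_al ?eq_ga. Qed.

End BinaryForms.

Lemma rmorph_disc_transv (R S : comRingType) (f : {rmorphism R -> S}) (al ga : nat -> R) :
  f (disc_transv al ga) = disc_transv (f \o al) (f \o ga).
Proof.
by rewrite /disc_transv /disc2 /transv2
  !(rmorph_nat, rmorphB, rmorphXn, rmorphM, rmorphN, rmorphD).
Qed.

Section BinaryFormCoefficients.
Variable R : numDomainType.
Implicit Types (P : {poly R}) (g h : nat -> R).

Lemma nonzero_roots_poly_eq0 P : (forall x, x != 0 -> root P x) -> P = 0.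
Proof.
move=> P_root; apply: (@roots_geq_poly_eq0 _ P [seq k.+1%:R | k <- iota 0 (size P)]).
- by apply/allP => _ /mapP [k _ ->]; rewrite P_root ?pnatr_eq0.
- by rewrite map_inj_uniq ?iota_uniq // => i j /eqP; rewrite eqr_nat => /eqP [].
- by rewrite size_map size_iota.
Qed.

Lemma binform_inj k g h : binform k g =2 binform k h -> forall i, (i <= k)%N -> g i = h i.
Proof.
move=> eq_gh i le_ik.
suff /polyP/(_ i) : \poly_(j < k.+1) g j = \poly_(j < k.+1) h j by rewrite !coef_poly ltnS le_ik.
apply/eqP; rewrite -subr_eq0; apply/eqP/nonzero_roots_poly_eq0 => y _.
rewrite /root hornerD hornerN !horner_poly subr_eq0; apply/eqP.
have := eq_gh 1 y; rewrite /binform.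
by under eq_bigr do rewrite expr1n mulr1; under [RHS]eq_bigr do rewrite expr1n mulr1.
Qed.

End BinaryFormCoefficients.

Section SL2Action.
Variable C : numClosedFieldType.
Local Notation V := ('I_11 -> C).
Implicit Types (a b c d t : C) (u v w : V) (g : nat -> C).

Definition mkv g : V := fun j => g j.

Lemma coordV_mkv g k : (k < 11)%N -> coordV (mkv g) k = g k.
Proof. by move=> lt_k; rewrite /coordV /mkv /= inordK. Qed.

Lemma coordV_ext u w : (forall k, (k < 11)%N -> coordV u k = coordV w k) -> u =1 w.
Proof. by move=> eq_uw j; rewrite -[j]inord_val; apply: eq_uw. Qed.

Definition coords (o : nat) v : nat -> C := fun i => coordV v (o + i).

Lemma bformE k o v : bform k o v = binform k (coords o v).
Proof. by []. Qed.

(* [g . F = F o g^-1], and [g^-1 = [[d, -b], [-c, a]]] when [a d - b c = 1] *)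
Definition SL2_act a b c d v : V := mkv (fun k =>
  if (k < 3)%N then sub2 d (- b) (- c) a (coords 0 v) k
  else if (k < 6)%N then sub2 d (- b) (- c) a (coords 3 v) (k - 3)
  else sub4 d (- b) (- c) a (coords 6 v) (k - 6)).

Lemma SL2_act_moves a b c d v : a * d - b * c = 1 -> SL2_moves a b c d v (SL2_act a b c d v).
Proof.
move=> det x y.
have ex : d * (a * x + b * y) + - b * (c * x + d * y) = x.
  by rewrite -[RHS]mul1r -det; ring.
have ey : - c * (a * x + b * y) + a * (c * x + d * y) = y.
  by rewrite -[RHS]mul1r -det; ring.
rewrite /Defs.formA /Defs.formB /Defs.formC !bformE.
split.
- rewrite (@eq_binform _ 2 _ (sub2 d (- b) (- c) a (coords 0 v))).
    by rewrite -binform2_sub ex ey.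
  by case=> [|[|[|]]] // _; rewrite /coords coordV_mkv.
- rewrite (@eq_binform _ 2 _ (sub2 d (- b) (- c) a (coords 3 v))).
    by rewrite -binform2_sub ex ey.
  by case=> [|[|[|]]] // _; rewrite /coords coordV_mkv.
- rewrite (@eq_binform _ 4 _ (sub4 d (- b) (- c) a (coords 6 v))).
    by rewrite -binform4_sub ex ey.
  by case=> [|[|[|[|[|]]]]] // _; rewrite /coords coordV_mkv.
Qed.

Lemma SL2_actD a b c d u w : SL2_act a b c d (u \+ w) =1 SL2_act a b c d u \+ SL2_act a b c d w.
Proof.
move=> j; rewrite /SL2_act /mkv /=.
by case: ifP => _; [|case: ifP => _]; [exact: sub2D | exact: sub2D | exact: sub4D].
Qed.

Lemma invariant_SL2_act p a b c d v : SL2_invariant p -> a * d - b * c = 1 ->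
  meval (SL2_act a b c d v) p = meval v p.
Proof. by move=> p_inv det; apply: p_inv det _ _ (SL2_act_moves v det). Qed.

(* [diag(t, t^-1)] scales the coordinate [k] by [t ^+ wt k / t ^+ 4]: the weights are shifted
   by 4, so a product of two coordinates is torus invariant iff their [wt] add up to 8 *)
Definition wt (k : nat) : nat := nth 0%N [:: 2; 4; 6; 2; 4; 6; 0; 2; 4; 6; 8]%N k.

Lemma coordV_val v (j : 'I_11) : coordV v j = v j.
Proof. by rewrite /coordV inord_val. Qed.

Lemma coordVD u w k : coordV (u \+ w) k = coordV u k + coordV w k.
Proof. by []. Qed.

Lemma coordVZ a u k : coordV (fun j => a * u j) k = a * coordV u k.
Proof. by []. Qed.

Ltac coordinatewise := apply: coordV_ext => -[|[|[|[|[|[|[|[|[|[|[|?]]]]]]]]]]] // _;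
  rewrite ?coordVD ?coordVZ !coordV_mkv //= /coords !addnE /= ?coordV_mkv //=.

Lemma SL2_act_torus t v : t != 0 ->
  SL2_act t 0 0 t^-1 v =1 mkv (fun k => t ^+ wt k / t ^+ 4 * coordV v k).
Proof. by move=> t_neq0; coordinatewise; field. Qed.

Lemma torus_det t : t != 0 -> t * t^-1 - 0 * 0 = 1.
Proof. by move=> t_neq0; rewrite mulfV // mulr0 subr0. Qed.

Lemma SL2_act_torus_special_point t a b : t != 0 ->
  SL2_act t 0 0 t^-1 (special_point a b) =1
  (fun j => t ^+ 2 * special_point (a / t ^+ 4) (b / t ^+ 4) j).
Proof.
move=> t_neq0 j; rewrite SL2_act_torus // /mkv coordV_val /special_point.
by do 3 (case: eqP => [-> /=|_]; first by field); rewrite !mulr0.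
Qed.

Lemma invariant_special_point_torus p (n : nat) t a b :
  SL2_invariant p -> p \is n.-homog -> t != 0 ->
  meval (special_point a b) p = t ^+ (2 * n) * meval (special_point (a / t ^+ 4) (b / t ^+ 4)) p.
Proof.
move=> p_inv p_n t_neq0.
rewrite -(invariant_SL2_act _ p_inv (torus_det t_neq0)).
rewrite (meval_eq p (SL2_act_torus_special_point _ _ t_neq0)).
by rewrite (meval_homogZ _ _ p_n) exprM.
Qed.

Lemma cubic_invariant_special_point p a b : SL2_invariant p -> p \is 3.-homog ->
  meval (special_point a b) p = 0.
Proof.
move=> p_inv p3.
have i4 : 'i ^+ 4 = 1 :> C by rewrite (exprM _ 2 2) sqrCi expr2 mulN1r opprK.
have := invariant_special_point_torus a b p_inv p3 (neq0Ci C).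
rewrite i4 !divr1 (exprM _ 2 3) sqrCi -signr_odd expr1 mulN1r => /eqP.
by rewrite -subr_eq0 opprK -mulr2n mulrn_eq0 => /eqP.
Qed.

Lemma quartic_invariant_special_point_scale q (nu : C) a b : SL2_invariant q -> q \is 4.-homog ->
  nu != 0 -> meval (special_point (nu * a) (nu * b)) q = nu ^+ 2 * meval (special_point a b) q.
Proof.
move=> q_inv q4 nu_neq0.
have t4 : (4.-root nu^-1) ^+ 4 = nu^-1 by rewrite rootCK.
have t_neq0 : 4.-root nu^-1 != 0 by rewrite rootC_eq0 ?invr_eq0.
rewrite (invariant_special_point_torus a b q_inv q4 t_neq0) t4 !invrK (exprM _ 4 2) t4.
by rewrite mulrA -exprMn mulfV // expr1n mul1r ![_ * nu]mulrC.
Qed.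

Definition delta (k : nat) : V := mkv (fun j => (j == k)%:R).

Lemma special_pointE a b :
  special_point a b =1 (fun j => a * delta 0 j) \+ ((fun j => b * delta 3 j) \+ delta 9).
Proof.
move=> j; rewrite /special_point /delta /mkv /=.
by case: (nat_of_ord j) => [|[|[|[|[|[|[|[|[|[|?]]]]]]]]]] /=; ring.
Qed.

Section QuadraticInvariant.
Variable p : {mpoly C[11]}.
Hypotheses (p2 : p \is 2.-homog) (p_inv : SL2_invariant p).

Lemma polar_SL2_act a b c d u w : a * d - b * c = 1 ->
  polar p (SL2_act a b c d u) (SL2_act a b c d w) = polar p u w.
Proof.
by move=> det; rewrite /polar -(meval_eq p (SL2_actD a b c d u w)) !(invariant_SL2_act _ p_inv det).
Qed.

Lemma SL2_act_torus_delta t k : t != 0 ->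
  SL2_act t 0 0 t^-1 (delta k) =1 (fun j => t ^+ wt k / t ^+ 4 * delta k j).
Proof.
move=> t_neq0 j; rewrite SL2_act_torus // /mkv coordV_val /delta /mkv.
by case: eqP => [->|]; rewrite ?mulr0.
Qed.

Definition polar_delta i j := polar p (delta i) (delta j).

Lemma polar_deltaE i j : polar p (delta i) (delta j) = (wt i + wt j == 8)%N%:R * polar_delta i j.
Proof.
rewrite /polar_delta; case: eqP => [_|wt_neq]; first by rewrite mul1r.
have two_neq0 : 2 != 0 :> C by rewrite pnatr_eq0.
have := polar_SL2_act (delta i) (delta j) (torus_det two_neq0).
rewrite (eq_polar p (SL2_act_torus_delta i two_neq0) (SL2_act_torus_delta j two_neq0)).
rewrite polarZl // polarZr //.
rewrite mulrA mul0r => E; apply/eqP; apply: contraTT isT => B_neq0.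
have : (2 ^+ (wt i + wt j) : C) = 2 ^+ 8.
  by apply: (mulIf B_neq0); rewrite -[in RHS]E exprD; field.
by rewrite -!natrX => /eqP; rewrite eqr_nat eqn_exp2l // => /eqP /wt_neq.
Qed.

(* The unipotents [x |-> x - y] and [y |-> y - x] give the independent relations
   [2 B(o,9) + 2 B(o+1,8) = 0] and [B(o,9) + 3 B(o+1,8) = 0]. *)
Lemma polar_delta_key o : o = 0%N \/ o = 3%N -> polar_delta o 9 = 0.
Proof.
move=> o_AB.
have up_det : 1 * 1 - (-1) * 0 = 1 :> C by rewrite mulr0 subr0 mulr1.
have lo_det : 1 * 1 - 0 * (-1) = 1 :> C by rewrite mul0r subr0 mulr1.
have up_o : SL2_act 1 (-1) 0 1 (delta o) =1 delta o \+ ((fun j => 2 * delta o.+1 j) \+ delta o.+2).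
  by case: o_AB => ->; coordinatewise; ring.
have up_8 : SL2_act 1 (-1) 0 1 (delta 8) =1 delta 8 \+ ((fun j => 2 * delta 9 j) \+ delta 10).
  by coordinatewise; ring.
have lo_o : SL2_act 1 0 (-1) 1 (delta o.+1) =1 delta o \+ delta o.+1.
  by case: o_AB => ->; coordinatewise; ring.
have lo_9 : SL2_act 1 0 (-1) 1 (delta 9) =1
    delta 6 \+ ((fun j => 3 * delta 7 j) \+ ((fun j => 3 * delta 8 j) \+ delta 9)).
  by coordinatewise; ring.
have := polar_SL2_act (delta o) (delta 8) up_det; rewrite (eq_polar p up_o up_8).
have := polar_SL2_act (delta o.+1) (delta 9) lo_det; rewrite (eq_polar p lo_o lo_9).
rewrite !(polarDl, polarDr, polarZl, polarZr) // !polar_deltaE.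
have solve (x y : C) : x + 3 * y = 0 -> 2 * x + 2 * y = 0 -> x = 0.
  move=> E2 E1; apply/eqP; rewrite -[_ == 0]/((4 == 0)%N || _) -mulrn_eq0.
  have -> : x *+ 4 = 3 * (2 * x + 2 * y) - 2 * (x + 3 * y) by ring.
  by rewrite E1 E2 !mulr0 subr0.
by case: o_AB => -> /=; rewrite !(mul0r, mulr0, mul1r, add0r, addr0); apply: solve.
Qed.

Lemma quadratic_invariant_special_point a b : meval (special_point a b) p = 0.
Proof.
have := polarxx p2 (special_point a b).
rewrite (eq_polar p (special_pointE a b) (special_pointE a b)).
rewrite !(polarDl, polarDr, polarZl, polarZr) // !polar_deltaE /=.
rewrite [polar_delta 9 0]polarC [polar_delta 9 3]polarC -/(polar_delta 0 9) -/(polar_delta 3 9).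
rewrite (polar_delta_key (or_introl erefl)) (polar_delta_key (or_intror erefl)).
rewrite !(mul0r, mulr0, add0r, addr0) => /esym/eqP.
by rewrite mulf_eq0 pnatr_eq0 => /eqP.
Qed.

End QuadraticInvariant.

Lemma low_degree_invariant_special_point p : SL2_invariant p ->
  p \is 2.-homog \/ p \is 3.-homog -> forall a b, meval (special_point a b) p = 0.
Proof.
move=> p_inv [p2 | p3] a b; first exact: quadratic_invariant_special_point.
exact: cubic_invariant_special_point.
Qed.

Lemma special_point_mkv a b : special_point a b =
  mkv (fun k => if k == 0%N then a else if k == 3%N then b else if k == 9%N then 1 else 0).
Proof. by []. Qed.

Lemma quartic_invariant_special_root q : SL2_invariant q -> q \is 4.-homog ->
  exists a b, (a != 0 \/ b != 0) /\ meval (special_point a b) q = 0.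
Proof.
move=> q_inv q4.
have [G G_E] := meval_line_poly q (special_point 1 0) (delta 3).
have [H H_E] := meval_line_poly q (special_point 0 1) (delta 0).
have line_A x : meval (special_point 1 x) q = G.[x].
  rewrite -G_E; apply: meval_eq => j; rewrite /special_point /delta /mkv /=.
  by case: (nat_of_ord j) => [|[|[|[|[|[|[|[|[|[|?]]]]]]]]]] /=; ring.
have line_B x : meval (special_point x 1) q = H.[x].
  rewrite -H_E; apply: meval_eq => j; rewrite /special_point /delta /mkv /=.
  by case: (nat_of_ord j) => [|[|[|[|[|[|[|[|[|[|?]]]]]]]]]] /=; ring.
have [/closed_rootP [x G_x] | ] := boolP (size G != 1%N).
  by exists 1, x; split; [left; exact: oner_neq0 | rewrite line_A; exact/eqP].
rewrite negbK => /size_poly1P [c _ G_c]; exists 0, 1; split; first by right; exact: oner_neq0.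
suff H_c : H = c *: 'X^2 by rewrite line_B H_c hornerZ hornerXn expr0n mulr0.
apply/eqP; rewrite -subr_eq0; apply/eqP/nonzero_roots_poly_eq0 => x x_neq0.
have := quartic_invariant_special_point_scale 1 (x^-1) q_inv q4 x_neq0.
rewrite mulr1 mulfV // line_A line_B G_c hornerC => H_x.
by rewrite /root hornerD hornerN hornerZ hornerXn H_x mulrC subrr.
Qed.

Definition disc_transv_mpoly (o : nat) : {mpoly C[11]} :=
  disc_transv (fun i => 'X_(inord (o + i))) (fun i => 'X_(inord (6 + i))).

Lemma meval_disc_transv_mpoly o v :
  meval v (disc_transv_mpoly o) = disc_transv (coords o v) (coords 6 v).
Proof.
by rewrite (rmorph_disc_transv (meval v)); apply: eq_disc_transv => i _ /=; rewrite mevalXU.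
Qed.

Lemma disc_transv_mpoly_scale o k v :
  meval (fun j => k * v j) (disc_transv_mpoly o) = k ^+ 4 * meval v (disc_transv_mpoly o).
Proof. by rewrite !meval_disc_transv_mpoly /disc_transv /disc2 /transv2 /coords /coordV; ring. Qed.

Lemma disc_transv_mpoly_invariant o : o = 0%N \/ o = 3%N -> SL2_invariant (disc_transv_mpoly o).
Proof.
move=> o_AB a b c d det v v' v_v'; rewrite !meval_disc_transv_mpoly.
have eq_AB : forall i, (i <= 2)%N -> coords o v i = sub2 a b c d (coords o v') i.
  apply: binform_inj => x y; rewrite -binform2_sub -!bformE.
  by case: o_AB (v_v' x y) => -> [].
have eq_C : forall i, (i <= 4)%N -> coords 6 v i = sub4 a b c d (coords 6 v') i.
  by apply: binform_inj => x y; rewrite -binform4_sub -!bformE; case: (v_v' x y).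
by rewrite (eq_disc_transv eq_AB eq_C) disc_transv_sub det expr1n mul1r.
Qed.

Lemma invariant_nonzero_special_point a b : a != 0 \/ b != 0 ->
  exists o, SL2_invariant (disc_transv_mpoly o) /\
            meval (special_point a b) (disc_transv_mpoly o) != 0.
Proof.
have K_ab o : o = 0%N \/ o = 3%N -> meval (special_point a b) (disc_transv_mpoly o) =
    36 * (if o == 0%N then a else b) ^+ 2.
  rewrite meval_disc_transv_mpoly special_point_mkv /disc_transv /disc2 /transv2 /coords.
  by case=> ->; rewrite !addnE /= !coordV_mkv //=; ring.
case=> [a_neq0 | b_neq0]; [exists 0%N; rewrite K_ab; last by left |
  exists 3%N; rewrite K_ab; last by right].
  by split; [apply: disc_transv_mpoly_invariant; left | rewrite mulf_neq0 ?pnatr_eq0 ?expf_neq0].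
by split; [apply: disc_transv_mpoly_invariant; right | rewrite mulf_neq0 ?pnatr_eq0 ?expf_neq0].
Qed.

Lemma not_integral_over_common_zero m (f : 'I_m -> {mpoly C[11]}) r v (d : nat) :
  (forall i, exists2 n, (0 < n)%N & f i \is n.-homog) -> (forall i, meval v (f i) = 0) ->
  SL2_invariant r -> (0 < d)%N -> (forall k, meval (fun j => k * v j) r = k ^+ d * meval v r) ->
  meval v r != 0 -> ~ R_integral_over f.
Proof.
move=> f_homog f_v r_inv d_gt0 r_d r_v f_int.
have [n [s [s_f r_root]]] := f_int r r_inv.
have f_line k i : meval (fun j => k * v j) (f i) = 0.
  by have [ni _ f_ni] := f_homog i; rewrite (meval_homogZ _ _ f_ni) f_v mulr0.
have s_const i k : meval (fun j => k * v j) (s i) = meval (fun j => 0 * v j) (s i).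
  have [Q ->] := s_f i; rewrite !comp_mpoly_meval.
  by apply: meval_eq => j; rewrite !tnth_mktuple !f_line.
pose P : {poly C} := 'X^n + \sum_(i < n) (meval (fun j => 0 * v j) (s i))%:P * 'X^i.
suff : P = 0.
  move/(congr1 (fun P : {poly C} => P`_n)); rewrite coefD coefXn eqxx coef_sum coef0.
  rewrite big1 ?addr0 => [/eqP|i _]; first by rewrite oner_eq0.
  by rewrite coefCM coefXn eq_sym (ltn_eqF (ltn_ord i)) mulr0.
apply: nonzero_roots_poly_eq0 => z _; pose k : C := d.-root (z / meval v r).
have r_k : meval (fun j => k * v j) r = z by rewrite r_d rootCK // mulfVK.
have := congr1 (fun q : {mpoly C[11]} => meval (fun j => k * v j) q) r_root.
rewrite mevalD meval0 mevalXn r_k /root => <-.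
rewrite hornerD hornerXn horner_sum (big_morph _ (mevalD _) (meval0 _)); apply/eqP.
congr (_ + _); apply: eq_bigr => i _.
by rewrite hornerCM hornerXn mevalM mevalXn r_k s_const.
Qed.

End SL2Action.

Lemma hsop_degs_low (i : 'I_8) : (i < 7)%N -> hsop_degs i = 2%N \/ hsop_degs i = 3%N.
Proof. by case: i => [[|[|[|[|[|[|[|?]]]]]]] ?] //= _; auto. Qed.

Theorem mainTheorem10 (C : numClosedFieldType) :
  ~ (exists f : 'I_8 -> {mpoly C[11]},
        is_hsop f /\ forall i, f i \is (hsop_degs i).-homog)
  /\
  (forall p : {mpoly C[11]}, SL2_invariant p ->
     (p \is 2.-homog \/ p \is 3.-homog) ->
     forall a b : C, meval (special_point a b) p = 0).
Proof.
split; last exact: low_degree_invariant_special_point.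
case=> f [[f_inv f_homog _ f_int] f_deg].
have [a [b [ab_neq0 f7_ab]]] := quartic_invariant_special_root (f_inv ord_max) (f_deg ord_max).
have f_ab i : meval (special_point a b) (f i) = 0.
  have [i_lt7 | i_ge7] := ltnP i 7.
    apply: (low_degree_invariant_special_point (f_inv i)).
    by case: (hsop_degs_low i_lt7) (f_deg i) => ->; [left | right].
  suff -> : i = ord_max by [].
  by apply: val_inj; apply/eqP; rewrite eqn_leq i_ge7 -ltnS ltn_ord.
have [o [K_inv K_ab]] := invariant_nonzero_special_point ab_neq0.
exact: not_integral_over_common_zero f_homog f_ab K_inv (isT : (0 < 4)%N)
  (fun k => disc_transv_mpoly_scale o k _) K_ab f_int.
Qed.
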